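(* Let $G$ be a circle of circumference $1$, let $\mathbf{x}\in G^n$ be such that the agents are not on one semicircle, and let $y\in G$. Let $\mathbf{x}\cup\{y\}\in G^{n+1}$ be the profile $\mathbf{x}$ with one additional agent located at $y$. Then $\mathrm{cost}(\mathrm{rc}(\mathbf{x}),y)\ge\mathrm{cost}(\mathrm{rc}(\mathbf{x}\cup\{y\}),y)$.
   Context: $d(x,y)$ is the shorter-arc length; $\hat x$ the antipode of $x$; $\mathrm{cost}(P,y)=\mathbb{E}_{z\sim P}[d(y,z)]$. Agents are on one semicircle if all locations lie in some closed arc of length $1/2$. RC mechanism on a profile $(z_1,\dots,z_m)$ not on one semicircle: the antipodal points $\hat{z}_1,\dots,\hat{z}_m$ partition $G$ into arcs between cyclically consecutive antipodal points; $\mathrm{rc}$ returns the midpoint of each such arc with probability equal to its length. *)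

From Stdlib Require Import Reals Lra List.
Import ListNotations.
Open Scope R_scope.

(* The circle G of circumference 1 is R/Z; a point of G is represented by any
   real number, interpreted modulo 1.  frac_part gives the canonical
   representative in [0,1). *)

Definition ccw (a b : R) : R := frac_part (b - a).

Definition dist (x y : R) : R := Rmin (ccw x y) (ccw y x).

Definition antipode (x : R) : R := frac_part (x + / 2).

Definition on_one_semicircle (l : list R) : Prop :=
  exists c : R, Forall (fun z => ccw c z <= / 2) l.

(* a finitely supported distribution over G: list of (probability, point) *)
Definition dist_G := list (R * R).

Definition cost (P : dist_G) (y : R) : R :=
  fold_right (fun wp acc => fst wp * dist y (snd wp) + acc) 0 P.

Definition antipodes (l : list R) : list R :=
  nodup Req_EM_T (map antipode l).

(* length of the arc from a (counter-clockwise) to the next distinct point of A;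
   1 (the full circle) if there is no other point *)
Definition gap (A : list R) (a : R) : R :=
  fold_right (fun b m => if Req_EM_T b a then m else Rmin (ccw a b) m) 1 A.

(* The RC mechanism: the antipodal points partition G into arcs between
   cyclically consecutive antipodal points; return the midpoint of each arc
   with probability equal to its length. *)
Definition rc (l : list R) : dist_G :=
  let A := antipodes l in
  map (fun a => (gap A a, a + gap A a / 2)) A.

From Pilot Require Import Defs.
From Stdlib Require Import Reals List.
Import ListNotations.
Open Scope R_scope.
From Stdlib Require Import Lra Lia Permutation ZArith.

(* Write A for the antipodal points of x and v for the antipode
   of y; then y is the antipode of v.  The cost of rc(x) at y is a sum over
   the arcs [a, a + g) of A of g * d(y, a + g/2) = g * (1/2 - d(v, a + g/2)).
   - If v already belongs to A, then x and x ++ [y] have the same antipodal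
     points, so the two mechanisms coincide.
   - Otherwise v splits exactly one arc [a0, a0 + L) of A, at offset L1, into
     [a0, a0 + L1) and [v, v + L - L1); every other arc is unchanged.  An arc
     of length g containing v at offset t contributes g * (1/2 - |g/2 - t|),
     and an elementary quadratic inequality shows that the two new arcs
     contribute no more than the old one.
   The file develops, in order: arithmetic on the circle R/Z (counter-clockwise
   distance, distance to an antipode), the arc lengths [gap], sums over lists,
   the effect on the arcs of inserting one new point, and finally the theorem. *)

Definition same_point (a b : R) : Prop := exists k : Z, a = b + IZR k.

Lemma IZR_small (k : Z) : -1 < IZR k -> IZR k < 1 -> k = 0%Z.
Proof. intros H1 H2. apply lt_IZR in H1. apply lt_IZR in H2. lia. Qed.

Lemma frac_part_char (t r : R) (k : Z) : 0 <= t < 1 -> r = t + IZR k -> frac_part r = t.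
Proof.
  intros Ht Hr. unfold frac_part. destruct (base_Int_part r) as [H1 H2].
  assert (Hk : Int_part r = k).
  { assert (Int_part r - k = 0)%Z; [|lia].
    apply IZR_small; rewrite minus_IZR; lra. }
  rewrite Hk; lra.
Qed.

Lemma ccw_char a b t : 0 <= t < 1 -> same_point b (a + t) -> ccw a b = t.
Proof. intros Ht [k Hk]. unfold ccw. apply (frac_part_char t _ k); lra. Qed.

Lemma ccw_range a b : 0 <= ccw a b < 1.
Proof. unfold ccw. destruct (base_fp (b - a)); lra. Qed.

Lemma ccw_spec a b : same_point b (a + ccw a b).
Proof. exists (Int_part (b - a)). unfold ccw, frac_part. ring. Qed.

Lemma ccw_same_point_l a a' b : same_point a a' -> ccw a b = ccw a' b.
Proof.
  intros [m Hm]. destruct (ccw_spec a b) as [k Hk].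
  symmetry. apply ccw_char; [apply ccw_range|].
  exists (k + m)%Z. rewrite plus_IZR; lra.
Qed.

Lemma ccw_same_point_r a b b' : same_point b b' -> ccw a b = ccw a b'.
Proof.
  intros [m Hm]. destruct (ccw_spec a b) as [k Hk].
  symmetry. apply ccw_char; [apply ccw_range|].
  exists (k - m)%Z. rewrite minus_IZR; lra.
Qed.

Lemma ccw_chasles a b c : ccw a b <= ccw a c -> ccw b c = ccw a c - ccw a b.
Proof.
  intros H. destruct (ccw_spec a b) as [k Hk]. destruct (ccw_spec a c) as [m Hm].
  pose proof (ccw_range a b); pose proof (ccw_range a c).
  apply ccw_char; [lra|]. exists (m - k)%Z. rewrite minus_IZR; lra.
Qed.

Lemma ccw_chasles_wrap a b c : ccw a c < ccw a b -> ccw b c = ccw a c - ccw a b + 1.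
Proof.
  intros H. destruct (ccw_spec a b) as [k Hk]. destruct (ccw_spec a c) as [m Hm].
  pose proof (ccw_range a b); pose proof (ccw_range a c).
  apply ccw_char; [lra|]. exists (m - k - 1)%Z. rewrite !minus_IZR; simpl; lra.
Qed.

Lemma ccw_self a : ccw a a = 0.
Proof. apply ccw_char; [lra|]. exists 0%Z. simpl; lra. Qed.

Lemma ccw_reverse a b : ccw a b <> 0 -> ccw b a = 1 - ccw a b.
Proof.
  intros H. pose proof (ccw_range a b).
  rewrite (ccw_chasles_wrap a b a); rewrite ?ccw_self; lra.
Qed.

Lemma canonical_eq a b : 0 <= a < 1 -> 0 <= b < 1 -> ccw a b = 0 -> a = b.
Proof.
  intros Ha Hb H. destruct (ccw_spec a b) as [k Hk]. rewrite H in Hk.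
  assert (k = 0%Z) by (apply IZR_small; lra). subst k; simpl in Hk; lra.
Qed.

Lemma dist_same_point_l a a' b : same_point a a' -> Defs.dist a b = Defs.dist a' b.
Proof.
  intros H. unfold Defs.dist.
  rewrite (ccw_same_point_l a a' b H), (ccw_same_point_r b a a' H). reflexivity.
Qed.

Lemma dist_shift u s : -/2 <= s <= /2 -> Defs.dist u (u + s) = Rabs s.
Proof.
  intros Hs. unfold Defs.dist. destruct (Rle_dec 0 s).
  - rewrite (ccw_char u (u + s) s); [|lra|exists 0%Z; simpl; lra].
    rewrite Rabs_right by lra. destruct (Req_dec s 0).
    + subst. rewrite Rplus_0_r, ccw_self. unfold Rmin; destruct Rle_dec; lra.
    + rewrite (ccw_char (u + s) u (1 - s)); [|lra|exists (-1)%Z; simpl; lra].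
      unfold Rmin; destruct Rle_dec; lra.
  - rewrite (ccw_char u (u + s) (s + 1)); [|lra|exists (-1)%Z; simpl; lra].
    rewrite (ccw_char (u + s) u (- s)); [|lra|exists 0%Z; simpl; lra].
    rewrite Rabs_left by lra. unfold Rmin; destruct Rle_dec; lra.
Qed.

Lemma dist_from_antipode y u p :
  same_point y (u + /2) -> Defs.dist y p = /2 - Defs.dist u p.
Proof.
  intros [m Hm]. destruct (ccw_spec u p) as [k Hk].
  set (t := ccw u p) in *. pose proof (ccw_range u p) as Ht. fold t in Ht.
  unfold Defs.dist. fold t.
  destruct (Rle_dec (/2) t).
  - rewrite (ccw_char y p (t - /2)); [|lra|exists (k - m)%Z; rewrite minus_IZR; lra].
    rewrite (ccw_reverse u p) by (fold t; lra). fold t.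
    destruct (Req_dec t (/2)).
    + rewrite (ccw_char p y 0); [|lra|exists (m - k)%Z; rewrite minus_IZR; lra].
      unfold Rmin; repeat destruct Rle_dec; lra.
    + rewrite (ccw_char p y (3/2 - t));
        [|lra|exists (m - k - 1)%Z; rewrite !minus_IZR; simpl; lra].
      unfold Rmin; repeat destruct Rle_dec; lra.
  - rewrite (ccw_char y p (t + /2));
      [|lra|exists (k - m - 1)%Z; rewrite !minus_IZR; simpl; lra].
    rewrite (ccw_char p y (/2 - t)); [|lra|exists (m - k)%Z; rewrite minus_IZR; lra].
    destruct (Req_dec t 0) as [Ht0|Ht0].
    + rewrite (ccw_char p u 0); [|lra|exists (- k)%Z; rewrite opp_IZR; lra].
      unfold Rmin; repeat destruct Rle_dec; lra.
    + rewrite (ccw_reverse u p) by (fold t; lra). fold t.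
      unfold Rmin; repeat destruct Rle_dec; lra.
Qed.

Lemma antipode_antipode y : same_point y (antipode y + /2).
Proof.
  unfold antipode, frac_part. exists (Int_part (y + /2) - 1)%Z.
  rewrite minus_IZR. simpl. lra.
Qed.

Lemma antipode_canonical z : 0 <= antipode z < 1.
Proof. unfold antipode. destruct (base_fp (z + /2)); lra. Qed.

Lemma gap_le A a b : In b A -> b <> a -> gap A a <= ccw a b.
Proof.
  induction A as [|c A IH]; simpl; [tauto|]. intros [->|H] Hne.
  - destruct (Req_EM_T b a); [congruence|]. apply Rmin_l.
  - destruct (Req_EM_T c a); [auto|]. eapply Rle_trans; [apply Rmin_r|auto].
Qed.

Lemma gap_le_1 A a : gap A a <= 1.
Proof.
  induction A as [|c A IH]; simpl; [lra|].
  destruct (Req_EM_T c a); [auto|]. eapply Rle_trans; [apply Rmin_r|auto].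
Qed.

Lemma gap_glb A a c :
  c <= 1 -> (forall b, In b A -> b <> a -> c <= ccw a b) -> c <= gap A a.
Proof.
  induction A as [|d A IH]; simpl; intros H1 H2; [lra|].
  destruct (Req_EM_T d a); [apply IH; auto|]. apply Rmin_glb; auto.
Qed.

Lemma gap_attained A a :
  gap A a = 1 \/ exists b, In b A /\ b <> a /\ gap A a = ccw a b.
Proof.
  induction A as [|d A IH]; simpl; [auto|].
  destruct (Req_EM_T d a).
  - destruct IH as [H|[b [H1 [H2 H3]]]]; auto. right; exists b; auto.
  - unfold Rmin; destruct Rle_dec.
    + right; exists d; auto.
    + destruct IH as [H|[b [H1 [H2 H3]]]]; auto. right; exists b; auto.
Qed.

Lemma gap_perm A A' a : Permutation A A' -> gap A a = gap A' a.
Proof.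
  induction 1; simpl; auto.
  - rewrite IHPermutation; auto.
  - destruct (Req_EM_T y a), (Req_EM_T x a); auto.
    rewrite !Rmin_assoc, (Rmin_comm (ccw a y)). auto.
  - congruence.
Qed.

Definition sum_over (f : R -> R) (A : list R) : R :=
  fold_right (fun a acc => f a + acc) 0 A.

Lemma sum_over_perm f A A' : Permutation A A' -> sum_over f A = sum_over f A'.
Proof. induction 1; simpl; auto; lra. Qed.

Lemma sum_over_ext f g A :
  (forall a, In a A -> f a = g a) -> sum_over f A = sum_over g A.
Proof. induction A; simpl; intros H; auto. rewrite H, IHA; auto. Qed.

Lemma sum_over_change_one f f' A a0 : NoDup A -> In a0 A ->
  (forall b, In b A -> b <> a0 -> f' b = f b) ->
  sum_over f' A - f' a0 = sum_over f A - f a0.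
Proof.
  induction A as [|c A IH]; simpl; [tauto|]. intros Hnd Hin H.
  inversion Hnd as [|? ? Hc Hnd']; subst. destruct (Req_EM_T c a0).
  - subst. rewrite (sum_over_ext f' f A); [lra|].
    intros b Hb. apply H; auto. intro; subst; tauto.
  - destruct Hin as [->|Hin]; [congruence|].
    rewrite H by auto. specialize (IH Hnd' Hin (fun b Hb => H b (or_intror Hb))). lra.
Qed.

Definition arc_term (y : R) (A : list R) (a : R) : R :=
  gap A a * Defs.dist y (a + gap A a / 2).

Lemma cost_rc l y : cost (rc l) y = sum_over (arc_term y (antipodes l)) (antipodes l).
Proof.
  unfold rc. set (B := antipodes l). clearbody B.
  assert (Hmap : forall C, cost (map (fun a => (gap B a, a + gap B a / 2)) C) y =
                           sum_over (arc_term y B) C).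
  { induction C as [|c C IH]; simpl; auto. rewrite IH. reflexivity. }
  apply Hmap.
Qed.

Lemma arc_terms_perm y A A' :
  Permutation A A' -> sum_over (arc_term y A) A = sum_over (arc_term y A') A'.
Proof.
  intros P. rewrite (sum_over_perm _ A A' P). apply sum_over_ext.
  intros a _. unfold arc_term. rewrite (gap_perm _ _ a P). reflexivity.
Qed.

Lemma arc_cost_through_antipode y v a g t :
  same_point y (v + /2) -> same_point v (a + t) -> 0 <= t <= g -> g <= 1 ->
  g * Defs.dist y (a + g / 2) = g * (/2 - Rabs (g / 2 - t)).
Proof.
  intros Hy Hv Ht Hg.
  rewrite (dist_from_antipode y v _ Hy), (dist_same_point_l v (a + t) _ Hv).
  replace (a + g / 2) with ((a + t) + (g / 2 - t)) by ring.
  rewrite dist_shift by lra. reflexivity.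
Qed.

Lemma split_arc_cost_le L L1 : 0 <= L1 <= L -> L <= 1 ->
  L1 * (/2 - Rabs (L1 / 2 - L1)) + (L - L1) * (/2 - Rabs ((L - L1) / 2 - 0))
  <= L * (/2 - Rabs (L / 2 - L1)).
Proof.
  intros H1 H2.
  rewrite (Rabs_left1 (L1 / 2 - L1)), (Rabs_right ((L - L1) / 2 - 0)) by lra.
  destruct (Rle_dec 0 (L / 2 - L1)).
  - rewrite Rabs_right by lra. nra.
  - rewrite Rabs_left by lra. nra.
Qed.

(* Inserting a new point v into a set A of canonical points.  The arc of A
   containing v starts at the point a0 of A closest to v clockwise; that arc
   is split and all other arcs are unchanged. *)
Section InsertPoint.

Variables (A : list R) (v a0 : R).
Hypothesis A_canonical : forall a, In a A -> 0 <= a < 1.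
Hypothesis v_canonical : 0 <= v < 1.
Hypothesis v_new : ~ In v A.
Hypothesis a0_in : In a0 A.
Hypothesis a0_closest : forall b, In b A -> ccw a0 v <= ccw b v.

Lemma a0_neq_v : a0 <> v.
Proof. intros ->. exact (v_new a0_in). Qed.

Lemma ccw_a0_v_pos : ccw a0 v <> 0.
Proof. intros Hz. apply a0_neq_v, canonical_eq; auto. Qed.

Lemma v_first_after_a0 b : In b A -> b <> a0 -> ccw a0 v <= ccw a0 b.
Proof.
  intros Hb Hne. destruct (Rle_dec (ccw a0 v) (ccw a0 b)) as [|Hlt]; auto.
  assert (ccw a0 b <> 0) by (intro Hz; apply Hne; symmetry; apply canonical_eq; auto).
  pose proof (ccw_range a0 b).
  pose proof (ccw_chasles a0 b v ltac:(lra)). pose proof (a0_closest b Hb). lra.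
Qed.

Lemma v_within_arc : ccw a0 v <= gap A a0.
Proof. apply gap_glb; [pose proof (ccw_range a0 v); lra|apply v_first_after_a0]. Qed.

Lemma gap_insert_other b : In b A -> b <> a0 -> gap (v :: A) b = gap A b.
Proof.
  intros Hb Hne. simpl. destruct (Req_EM_T v b) as [->|_]; [tauto|].
  apply Rmin_right. eapply Rle_trans; [apply (gap_le A b a0); auto|].
  destruct (Rle_dec (ccw b a0) (ccw b v)); auto.
  pose proof (ccw_chasles_wrap b a0 v ltac:(lra)). pose proof (a0_closest b Hb).
  pose proof (ccw_range b a0). lra.
Qed.

Lemma gap_insert_a0 : gap (v :: A) a0 = ccw a0 v.
Proof.
  simpl. destruct (Req_EM_T v a0); [congruence|]. apply Rmin_left, v_within_arc.
Qed.

Lemma gap_insert_v : gap (v :: A) v = gap A a0 - ccw a0 v.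
Proof.
  simpl. destruct (Req_EM_T v v) as [_|]; [|congruence].
  pose proof (ccw_reverse a0 v ccw_a0_v_pos).
  pose proof (ccw_range a0 v). pose proof (gap_le_1 A a0).
  apply Rle_antisym.
  - destruct (gap_attained A a0) as [HL|[b [Hb [Hne HL]]]].
    + eapply Rle_trans; [apply (gap_le A v a0 a0_in a0_neq_v)|lra].
    + eapply Rle_trans; [apply (gap_le A v b Hb); intros ->; tauto|].
      rewrite (ccw_chasles a0 v b) by (apply v_first_after_a0; auto). lra.
  - apply gap_glb; [lra|].
    intros b Hb Hne. destruct (Req_EM_T b a0) as [->|Hne']; [lra|].
    rewrite (ccw_chasles a0 v b) by (apply v_first_after_a0; auto).
    pose proof (gap_le A a0 b Hb Hne'). lra.
Qed.

Lemma insert_antipode_cost_le y : NoDup A -> same_point y (v + /2) ->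
  sum_over (arc_term y (v :: A)) (v :: A) <= sum_over (arc_term y A) A.
Proof.
  intros Hnd Hy. simpl.
  assert (Hothers : sum_over (arc_term y (v :: A)) A - arc_term y (v :: A) a0
                    = sum_over (arc_term y A) A - arc_term y A a0).
  { apply sum_over_change_one; auto.
    intros b Hb Hne. unfold arc_term. rewrite gap_insert_other; auto. }
  pose proof (ccw_range a0 v) as HL1. pose proof v_within_arc as HL1L.
  pose proof (gap_le_1 A a0) as HL.
  set (L := gap A a0) in *. set (L1 := ccw a0 v) in *.
  assert (Hold : arc_term y A a0 = L * (/2 - Rabs (L / 2 - L1))).
  { apply (arc_cost_through_antipode y v); [auto|apply ccw_spec|lra|lra]. }
  assert (Hfirst : arc_term y (v :: A) a0 = L1 * (/2 - Rabs (L1 / 2 - L1))).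
  { unfold arc_term. rewrite gap_insert_a0.
    apply (arc_cost_through_antipode y v); [auto|apply ccw_spec|lra|lra]. }
  assert (Hsecond : arc_term y (v :: A) v = (L - L1) * (/2 - Rabs ((L - L1) / 2 - 0))).
  { unfold arc_term. rewrite gap_insert_v.
    apply (arc_cost_through_antipode y v); [auto|exists 0%Z; simpl; lra|lra|lra]. }
  pose proof (split_arc_cost_le L L1 ltac:(lra) HL). lra.
Qed.

End InsertPoint.

Lemma argmin_exists (h : R -> R) (A : list R) :
  A <> [] -> exists a0, In a0 A /\ forall b, In b A -> h a0 <= h b.
Proof.
  induction A as [|c A IH]; [congruence|]. intros _.
  destruct A as [|d A].
  - exists c; split; [left; auto|]. intros b [->|[]]; lra.
  - destruct IH as [a [Ha Hb]]; [congruence|].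
    destruct (Rle_dec (h c) (h a)).
    + exists c; split; [left; auto|]. intros b [->|Hb']; [lra|].
      specialize (Hb b Hb'); lra.
    + exists a; split; [right; auto|]. intros b [->|Hb']; [lra|auto].
Qed.

Lemma antipodes_canonical l a : In a (antipodes l) -> 0 <= a < 1.
Proof.
  unfold antipodes. rewrite nodup_In, in_map_iff. intros [z [<- _]].
  apply antipode_canonical.
Qed.

Lemma antipodes_app_old l y : In (antipode y) (antipodes l) ->
  Permutation (antipodes (l ++ [y])) (antipodes l).
Proof.
  intros H. apply NoDup_Permutation; try apply NoDup_nodup.
  intros z. unfold antipodes in *. rewrite nodup_In in H.
  rewrite !nodup_In, map_app, in_app_iff. simpl. intuition. subst; auto.
Qed.

Lemma antipodes_app_new l y : ~ In (antipode y) (antipodes l) ->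
  Permutation (antipodes (l ++ [y])) (antipode y :: antipodes l).
Proof.
  intros H. apply NoDup_Permutation; try apply NoDup_nodup.
  - constructor; auto. apply NoDup_nodup.
  - intros z. unfold antipodes in *. simpl.
    rewrite !nodup_In, map_app, in_app_iff. simpl. intuition.
Qed.

Lemma antipodes_nonempty l : l <> [] -> antipodes l <> [].
Proof.
  destruct l as [|z l]; [congruence|]. intros _ HA.
  assert (Hz : In (antipode z) (antipodes (z :: l))).
  { unfold antipodes. rewrite nodup_In. left; auto. }
  rewrite HA in Hz. exact Hz.
Qed.

Theorem mainTheorem15 (x : list R) (y : R) :
  ~ on_one_semicircle x ->
  cost (rc x) y >= cost (rc (x ++ [y])) y.
Proof.
  intros Hns. apply Rle_ge. rewrite !cost_rc.
  destruct (in_dec Req_EM_T (antipode y) (antipodes x)) as [Hold|Hnew].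
  - apply Req_le, arc_terms_perm, antipodes_app_old, Hold.
  - rewrite (arc_terms_perm y _ _ (antipodes_app_new x y Hnew)).
    (* Not being on one semicircle is only needed to make A nonempty. *)
    assert (Hx : x <> []) by (intros ->; apply Hns; exists 0; constructor).
    destruct (argmin_exists (fun a => ccw a (antipode y)) (antipodes x)
                (antipodes_nonempty x Hx))
      as [a0 [Ha0 Hclosest]].
    apply (insert_antipode_cost_le (antipodes x) (antipode y) a0).
    + apply antipodes_canonical.
    + apply antipode_canonical.
    + exact Hnew.
    + exact Ha0.
    + exact Hclosest.
    + apply NoDup_nodup.
    + apply antipode_antipode.
Qed.
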